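(* There exist absolute constants $C_1,C_2>0$ such that the following holds. Let $\eta'\in(0,1)$, $k\in\mathbb{N}$, and $w=\lceil C_1k/(\eta')^2\rceil$. Let $\ell\in\mathbb{N}$, $\Delta=2^\ell$, $\mathbf{s}\in\mathbb{R}_{\ge0}^{G_\Delta}$, and let $\boldsymbol{\nu}_i\in\mathbb{R}^{C_{2^i}}$ ($i=0,\dots,\ell$) be arbitrary. Set $\mathbf{y}'_i=2^{-i}(\mathbf{P}_i\mathbf{s}+\boldsymbol{\nu}_i)$, $\mathbf{y}'=[\mathbf{y}'_0\cdots\mathbf{y}'_\ell]$. Run: $S_0=C_1$; for $i=1,\dots,\ell$, $T_i$ = children of cells in $S_{i-1}$, $S_i$ = a set of $\min\{w,|T_i|\}$ cells of $T_i$ with largest $\mathbf{y}'$-values; $S=\bigcup_iS_i$, $\hat{\mathbf{y}}=\mathbf{y}'|_S$; and let $\hat{\mathbf{s}}\in\arg\min_{\mathbf{s}'\in\mathbb{R}_{\ge0}^{G_\Delta}}\|\hat{\mathbf{y}}-\mathbf{P}\mathbf{s}'\|_1$. Let $\mathbf{y}^*\in\arg\min_{\mathbf{y}\in\mathcal{M}_w}\|\mathbf{P}\mathbf{s}-\mathbf{y}\|_1$, $T^*\in\mathcal{T}_w$ with $\mathrm{supp}(\mathbf{y}^* )\subseteq T^*$, and $V_i=(T^*\cap C_{2^i})\setminus S_i$. Then $$\|\mathbf{s}-\hat{\mathbf{s}}\|_{\mathrm{EMD}}\le\eta'\cdot\min_{\mathbf{s}'\ k\text{-sparse}}\|\mathbf{s}-\mathbf{s}'\|_{\mathrm{EMD}}+C_2\sum_{i=0}^\ell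 2^{-i}\big\|\boldsymbol{\nu}_i|_{V_i\cup S_i}\big\|_1,$$ the minimum over $k$-sparse $\mathbf{s}'\in\mathbb{R}^{G_\Delta}$.
   Context: $G_\Delta=\{(a/\Delta,b/\Delta): a,b\in\{0,\dots,\Delta-1\}\}$. Level-$i$ cells: $C_{2^i}=\{[a,a+2^{-i})\times[b,b+2^{-i}):(a,b)\in G_{2^i}\}$; $C_1$ is the single root cell $[0,1)^2$. $\mathbf{P}_i\in\{0,1\}^{C_{2^i}\times G_\Delta}$ with $\mathbf{P}_i(c,p)=1$ iff $p\in c$; $\mathbf{P}$ stacks $\mathbf{P}_0,2^{-1}\mathbf{P}_1,\dots,2^{-\ell}\mathbf{P}_\ell$. A cell $c'\in C_{2^i}$ is a child of $c\in C_{2^{i-1}}$ if $c'\subseteq c$ (a 4-ary tree rooted at $[0,1)^2$). $\mathcal{T}_w$: subtrees containing the root, closed under parents, with at most $w$ cells per level. $\mathcal{M}_w$: vectors $\mathbf{y}=[\mathbf{y}_0\cdots\mathbf{y}_\ell]$, $\mathbf{y}_i\in\mathbb{R}_{\ge0}^{C_{2^i}}$, with support in some $T\in\mathcal{T}_w$ and $\mathbf{y}(p)\ge2\sum_{c\text{ child of }p}\mathbf{y}(c)$ for all cells $p$ of levels $0,\dots,\ell-1$. $\mathbf{v}|_S$ is $\mathbf{v}$ restricted to $S$ (zero elsewhere); a vector is $k$-sparse if it has at most $k$ nonzero coordinates. $\mathrm{EMD}(\mathbf{p},\mathbf{q})$ for nonnegative $\mathbf{p},\mathbf{q}$ of equal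 mass is the minimum of $\sum\gamma(x,y)\|x-y\|_1$ over nonnegative couplings $\gamma$ with marginals $\mathbf{p},\mathbf{q}$; the EMD norm is $\|\mathbf{w}\|_{\mathrm{EMD}}=\min\{\mathrm{EMD}(\mathbf{p},\mathbf{q})+2\|\mathbf{r}\|_1:\mathbf{p},\mathbf{q}\ge0,\ \mathbf{p}-\mathbf{q}+\mathbf{r}=\mathbf{w},\ \|\mathbf{p}\|_1=\|\mathbf{q}\|_1\}$. *)

From HB Require Import structures.
From mathcomp Require Import all_boot all_order all_algebra.
From mathcomp Require Import classical_sets boolp reals.
From mathcomp Require Import Rstruct.
Set Implicit Arguments. Unset Strict Implicit. Unset Printing Implicit Defensive.
Import Order.TTheory GRing.Theory Num.Theory.
Local Open Scope ring_scope.

Section Defs.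
Variable R : realType.
Variable l : nat.

(* Grid G_Delta: the gpoint (a/Delta, b/Delta) is represented by (a, b). *)
Definition gpoint := ('I_(2 ^ l) * 'I_(2 ^ l))%type.

(* Cells of all levels 0..l: the level-i gcell
   [a/2^i,(a+1)/2^i) x [b/2^i,(b+1)/2^i) is represented by (i; (a, b)). *)
Definition gcell := {i : 'I_l.+1 & ('I_(2 ^ i) * 'I_(2 ^ i))%type}.

Definition lev (c : gcell) : nat := tag c.

Definition root : gcell := @Tagged 'I_l.+1 ord0 (fun i => ('I_(2 ^ i) * 'I_(2 ^ i))%type)
  (@Ordinal 1 0 isT, @Ordinal 1 0 isT).

Definition in_cell (c : gcell) (p : gpoint) : bool :=
  (((p.1 : nat) %/ 2 ^ (l - lev c) == (tagged c).1)
  && ((p.2 : nat) %/ 2 ^ (l - lev c) == (tagged c).2))%N.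

Definition is_child (c' c : gcell) : bool :=
  ((lev c' == (lev c).+1)
  && ((tagged c').1 %/ 2 == (tagged c).1) && ((tagged c').2 %/ 2 == (tagged c).2))%N.

(* P s, the stacked vector [P_0 s ; 2^-1 P_1 s ; ... ; 2^-l P_l s] *)
Definition Pmat (s : gpoint -> R) : gcell -> R :=
  fun c => (2 ^+ lev c)^-1 * \sum_(p : gpoint | in_cell c p) s p.

Definition l1c (v : gcell -> R) : R := \sum_(c : gcell) `|v c|.
Definition l1p (v : gpoint -> R) : R := \sum_(p : gpoint) `|v p|.

Definition in_Tw (w : nat) (T : {set gcell}) : Prop :=
  [/\ root \in T,
      (forall c' c, is_child c' c -> c' \in T -> c \in T)
    & (forall i : nat, #|[set c in T | lev c == i]| <= w)%N].

Definition in_Mw (w : nat) (y : gcell -> R) : Prop :=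
  [/\ (forall c, 0 <= y c),
      (exists T, in_Tw w T /\ forall c, y c != 0 -> c \in T)
    & (forall p, (lev p < l)%N -> 2 * \sum_(c : gcell | is_child c p) y c <= y p)].

Definition dist1 (x y : gpoint) : R :=
  (`|(x.1 : nat)%:R - (y.1 : nat)%:R| + `|(x.2 : nat)%:R - (y.2 : nat)%:R|)
    / (2 ^ l)%:R.

Definition EMD (p q : gpoint -> R) : R :=
  inf [set v | exists gamma : gpoint -> gpoint -> R,
         [/\ (forall x y, 0 <= gamma x y),
             (forall x, \sum_(y : gpoint) gamma x y = p x),
             (forall y, \sum_(x : gpoint) gamma x y = q y)
           & v = \sum_(x : gpoint) \sum_(y : gpoint) gamma x y * dist1 x y]].

Definition emd_norm (w : gpoint -> R) : R :=
  inf [set v | exists p q r : gpoint -> R,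
         [/\ (forall x, 0 <= p x), (forall x, 0 <= q x),
             (forall x, p x - q x + r x = w x),
             \sum_(x : gpoint) p x = \sum_(x : gpoint) q x
           & v = EMD p q + 2 * l1p r]].

Definition best_ksparse_emd (k : nat) (s : gpoint -> R) : R :=
  inf [set v | exists s' : gpoint -> R,
         (#|[set x | s' x != 0%R]| <= k)%N /\ v = emd_norm (fun x => s x - s' x)].

Definition children (A : {set gcell}) : {set gcell} :=
  [set c | [exists p in A, is_child c p]].

Definition greedy_run (w : nat) (y' : gcell -> R) (S : nat -> {set gcell}) : Prop :=
  S 0%N = [set root] /\
  forall i : nat, (1 <= i <= l)%N ->
    [/\ S i \subset children (S i.-1),
        #|S i| = minn w #|children (S i.-1)|
      & forall c c', c \in S i -> c' \in children (S i.-1) :\: S i -> y' c' <= y' c].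

End Defs.

From Pilot Require Import Defs.
From HB Require Import structures.
From mathcomp Require Import all_boot all_order all_algebra.
From mathcomp Require Import classical_sets boolp reals.
From mathcomp Require Import Rstruct.
From mathcomp Require Import zify ring lra.
Set Implicit Arguments. Unset Strict Implicit. Unset Printing Implicit Defensive.
Import Order.TTheory GRing.Theory Num.Theory.
Local Open Scope ring_scope.

(* Upper bound: moving the mass of f from the corners of the level-(j+1) cells to
   the corners of their level-j parents costs at most the level-j cell diameter
   2^(1-j) per unit, and what is left at level 0 is paid by the l1 term of the EMD
   norm; hence ||f||_EMD <= 3 ||P f||_1.  As s is a candidate for the fit of s-hat,
   ||P (s - s-hat)||_1 <= 2 ||P s - y-hat||_1, and the error of y-hat is the noise on
   the selected cells plus the mass of the unselected ones.  Unselected cells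
   outside T* weigh at most E = ||P s - y*||_1.  A cell of T* missed at level i
   either has a missed parent, which carries twice its mass, or lost against a
   selected cell outside T* of larger noisy value; so the missed mass satisfies a
   halving recursion driven by noise and by mass outside T*.
   Finally, if s' is k-sparse with support K, the cells lying within r cells of K
   form a tree with at most k (2r+1)^2 cells per level, and restricting P s to it
   costs at most (2/r) sum_x s(x) d(x, K) <= (2/r) ||s - s'||_EMD, because d(., K)
   is 1-Lipschitz, bounded by 2 and zero on K.  Thus E <= (2/r) ||s - s'||_EMD. *)

Lemma exp2_gt0 i : (0 < 2 ^ i)%N. Proof. by rewrite expn_gt0. Qed.

Section Cells.
Local Open Scope nat_scope.
Variable l : nat.
Local Notation gcell := (gcell l).
Local Notation gpoint := (gpoint l).

Definition cell_x (c : gcell) : nat := (tagged c).1.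
Definition cell_y (c : gcell) : nat := (tagged c).2.

(* Out-of-range arguments are clamped into range. *)
Definition mkcell (i a b : nat) : gcell :=
  let clamp (i : 'I_l.+1) (a : nat) : 'I_(2 ^ i) :=
    @Ordinal (2 ^ i) (minn a (2 ^ i).-1) (ltac:(have := exp2_gt0 i; lia)) in
  @Tagged 'I_l.+1 (inord i) (fun i : 'I_l.+1 => ('I_(2 ^ i) * 'I_(2 ^ i))%type)
     (clamp (inord i) a, clamp (inord i) b).

Lemma lev_leq (c : gcell) : lev c <= l.
Proof. by case: c => i ab; rewrite /lev /= -ltnS ltn_ord. Qed.

Lemma cell_x_lt (c : gcell) : cell_x c < 2 ^ lev c.
Proof. by case: c => i [a b]; rewrite /cell_x /lev /=. Qed.

Lemma cell_y_lt (c : gcell) : cell_y c < 2 ^ lev c.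
Proof. by case: c => i [a b]; rewrite /cell_y /lev /=. Qed.

Lemma lev_mkcell i a b : i <= l -> lev (mkcell i a b) = i.
Proof. by move=> il; rewrite /lev /mkcell /= inordK. Qed.

Lemma cell_x_mkcell i a b : i <= l -> a < 2 ^ i -> cell_x (mkcell i a b) = a.
Proof. by move=> il ai; rewrite /cell_x /mkcell /= inordK //; have := exp2_gt0 i; lia. Qed.

Lemma cell_y_mkcell i a b : i <= l -> b < 2 ^ i -> cell_y (mkcell i a b) = b.
Proof. by move=> il bi; rewrite /cell_y /mkcell /= inordK //; have := exp2_gt0 i; lia. Qed.

Lemma mkcellE (c : gcell) : c = mkcell (lev c) (cell_x c) (cell_y c).
Proof.
case: c => j [x y]; rewrite /lev /cell_x /cell_y /mkcell /=.
have -> : inord j = j by apply: val_inj; rewrite /= inordK // -ltnS ltn_ord.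
by congr existT; congr pair; apply: val_inj => /=; [have := ltn_ord x | have := ltn_ord y]; lia.
Qed.

Lemma cell_ext (c c' : gcell) :
  lev c = lev c' -> cell_x c = cell_x c' -> cell_y c = cell_y c' -> c = c'.
Proof. by move=> el ex ey; rewrite (mkcellE c) (mkcellE c') el ex ey. Qed.

Lemma lev0_root (c : gcell) : lev c = 0 -> c = Defs.root l.
Proof.
move=> c0; apply: cell_ext => //.
  by have := cell_x_lt c; rewrite c0 expn0 ltnS leqn0 => /eqP ->.
by have := cell_y_lt c; rewrite c0 expn0 ltnS leqn0 => /eqP ->.
Qed.

Definition side i := 2 ^ (l - i).

Lemma side_gt0 i : 0 < side i. Proof. exact: exp2_gt0. Qed.

Lemma side_succ i : i < l -> side i = side i.+1 * 2.
Proof. by move=> il; rewrite /side -expnSr; congr (_ ^ _); lia. Qed.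

Lemma div_side_lt (a i : nat) : i <= l -> a < 2 ^ l -> a %/ side i < 2 ^ i.
Proof. by move=> il al; rewrite ltn_divLR ?side_gt0 // -expnD subnKC. Qed.

Definition cell_of (i : nat) (p : gpoint) : gcell :=
  mkcell i (p.1 %/ side i) (p.2 %/ side i).

Lemma lev_cell_of i p : i <= l -> lev (cell_of i p) = i.
Proof. exact: lev_mkcell. Qed.

Lemma cell_x_cell_of i p : i <= l -> cell_x (cell_of i p) = p.1 %/ side i.
Proof. by move=> il; rewrite cell_x_mkcell // div_side_lt. Qed.

Lemma cell_y_cell_of i p : i <= l -> cell_y (cell_of i p) = p.2 %/ side i.
Proof. by move=> il; rewrite cell_y_mkcell // div_side_lt. Qed.

Lemma in_cellE (c : gcell) (p : gpoint) : in_cell c p =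
  (p.1 %/ side (lev c) == cell_x c) && (p.2 %/ side (lev c) == cell_y c).
Proof. by []. Qed.

Lemma in_cell_of (c : gcell) (p : gpoint) : in_cell c p = (c == cell_of (lev c) p).
Proof.
have cl := lev_leq c; rewrite in_cellE; apply/idP/eqP => [/andP[/eqP ex /eqP ey]|->].
  by apply: cell_ext; rewrite ?lev_cell_of ?cell_x_cell_of ?cell_y_cell_of.
by rewrite lev_cell_of // cell_x_cell_of // cell_y_cell_of // !eqxx.
Qed.

Lemma in_cell_cell_of i p : i <= l -> in_cell (cell_of i p) p.
Proof. by move=> il; rewrite in_cell_of lev_cell_of. Qed.

Lemma is_childE (c' c : gcell) : is_child c' c =
  [&& lev c' == (lev c).+1, cell_x c' %/ 2 == cell_x c & cell_y c' %/ 2 == cell_y c].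
Proof. by rewrite /is_child andbA. Qed.

Lemma in_cell_parent (c' c : gcell) p : is_child c' c -> in_cell c' p -> in_cell c p.
Proof.
rewrite is_childE !in_cellE => /and3P[/eqP l' /eqP ex /eqP ey] /andP[/eqP px /eqP py].
have cl := lev_leq c'; rewrite l' in cl.
by rewrite side_succ // !divnMA -l' px py ex ey !eqxx.
Qed.

Lemma child_cell_of (c : gcell) p : lev c < l -> in_cell c p ->
  is_child (cell_of (lev c).+1 p) c.
Proof.
move=> cl; rewrite in_cellE is_childE => /andP[/eqP px /eqP py].
by rewrite lev_cell_of // cell_x_cell_of // cell_y_cell_of // -!divnMA -side_succ // px py !eqxx.
Qed.

Definition parent (c : gcell) : gcell :=
  mkcell (lev c).-1 (cell_x c %/ 2) (cell_y c %/ 2).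

Lemma child_parent (c : gcell) : 0 < lev c -> is_child c (parent c).
Proof.
move=> c0; have cl := lev_leq c.
have e : 2 ^ lev c = 2 ^ (lev c).-1 * 2 by rewrite -expnSr prednK.
rewrite is_childE /parent lev_mkcell ?cell_x_mkcell ?cell_y_mkcell; try lia.
- by rewrite ltn_divLR // -e cell_y_lt.
- by rewrite ltn_divLR // -e cell_x_lt.
Qed.

Section Sums.
Variable R : realType.
Local Open Scope ring_scope.

Lemma sum_cells_containing (F : gcell -> R) (p : gpoint) :
  \sum_(c | in_cell c p) F c = \sum_(i < l.+1) F (cell_of i p).
Proof.
rewrite (partition_big (fun c : gcell => tag c) xpredT) //=.
apply: eq_bigr => i _.
rewrite (@eq_bigl _ _ _ _ _ _ (pred1 (cell_of i p))) ?big_pred1_eq // => c /=.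
have il : (i <= l)%N by rewrite -ltnS ltn_ord.
apply/andP/eqP => [[+ /eqP <-] | ->]; first by rewrite in_cell_of => /eqP.
by rewrite in_cell_cell_of //; split => //; apply/eqP/val_inj; exact: lev_cell_of.
Qed.

Lemma sum_children_in_cell (f : gpoint -> R) (c : gcell) : (lev c < l)%N ->
  \sum_(c' | is_child c' c) \sum_(p | in_cell c' p) f p = \sum_(p | in_cell c p) f p.
Proof.
move=> cl; rewrite (exchange_big_dep xpredT) //= [RHS]big_mkcond /=.
apply: eq_bigr => p _; case: ifP => pc.
  rewrite (@eq_bigl _ _ _ _ _ _ (pred1 (cell_of (lev c).+1 p))) ?big_pred1_eq // => c' /=.
  apply/andP/eqP => [[ch]|->]; last by rewrite child_cell_of // in_cell_cell_of.
  by rewrite in_cell_of; move: ch; rewrite is_childE => /and3P[/eqP-> _ _] /eqP.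
by rewrite big_pred0 // => c'; apply/negP => /andP[ch /(in_cell_parent ch)]; rewrite pc.
Qed.

Lemma Pmat_ge0 (s : gpoint -> R) : (forall x, 0 <= s x) -> forall c, 0 <= Pmat s c.
Proof. by move=> s0 c; rewrite mulr_ge0 ?invr_ge0 ?exprn_ge0 ?sumr_ge0. Qed.

Lemma Pmat_children (s : gpoint -> R) (c : gcell) : (lev c < l)%N ->
  2 * \sum_(c' | is_child c' c) Pmat s c' = Pmat s c.
Proof.
move=> cl; rewrite /Pmat.
under eq_bigr => c' /[dup] + _ do rewrite is_childE => /and3P[/eqP-> _ _].
rewrite -mulr_sumr sum_children_in_cell // exprS invfM !mulrA divff ?mul1r //.
by rewrite pnatr_eq0.
Qed.

Lemma Pmat_sub (f g : gpoint -> R) c :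
  Pmat (fun x => f x - g x) c = Pmat f c - Pmat g c.
Proof. by rewrite /Pmat sumrB mulrBr. Qed.

End Sums.
End Cells.

Section InfNonneg.
Variable R : realType.
Implicit Types E : set R.

Lemma inf_ge0 E : (forall y, E y -> 0 <= y) -> 0 <= inf E.
Proof.
move=> E0; have [[y Ey]|noE] := pselect (nonempty E); first by apply: lb_le_inf => //; exists y.
by rewrite inf_out // => -[[y Ey] _]; apply: noE; exists y.
Qed.

Lemma ge0_inf_le E x : (forall y, E y -> 0 <= y) -> E x -> inf E <= x.
Proof. by move=> E0 Ex; apply: (ge_inf _ Ex); exists 0 => y /E0. Qed.

End InfNonneg.

Lemma ler_sum_subpred (R : numDomainType) (T : finType) (A B : pred T) (G : T -> R) :
  (forall c, A c -> B c) -> (forall c, B c -> 0 <= G c) ->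
  \sum_(c | A c) G c <= \sum_(c | B c) G c.
Proof.
move=> AB G0; rewrite [X in X <= _]big_mkcond [X in _ <= X]big_mkcond /=.
apply: ler_sum => c _; case: ifP => Ac; first by rewrite AB.
by case: ifP => // Bc; rewrite G0.
Qed.

Lemma ler_sum_dominated (R : numFieldType) (T : finType) (A B : {set T}) (f g : T -> R) :
  (#|A| <= #|B|)%N -> (forall a b, a \in A -> b \in B -> f a <= g b) ->
  (forall b, b \in B -> 0 <= g b) ->
  \sum_(a in A) f a <= \sum_(b in B) g b.
Proof.
move=> AB fg g0; have [B0|B_gt0] := posnP #|B|.
  have A0 : #|A| = 0%N by lia.
  by rewrite big_pred0 ?sumr_ge0 // => a; rewrite (card0_eq A0).
rewrite -(ler_pM2l (_ : 0 < #|B|%:R)) ?ltr0n //.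
apply: le_trans (_ : #|A|%:R * \sum_(b in B) g b <= _); last first.
  by rewrite ler_wpM2r ?sumr_ge0 // ler_nat.
rewrite mulr_sumr; apply: le_trans (_ : \sum_(a in A) \sum_(b in B) g b <= _).
  by apply: ler_sum => a Aa; rewrite mulr_natl -sumr_const; apply: ler_sum => b Bb; apply: fg.
by rewrite sumr_const mulr_natl.
Qed.

Lemma sum_le_of_halving (R : realFieldType) (n : nat) (a b : nat -> R) :
  (forall i, 0 <= a i) -> (forall i, 0 <= b i) -> a 0%N = 0 ->
  (forall i, (0 < i <= n)%N -> a i <= a i.-1 / 2 + b i) ->
  \sum_(i < n.+1) a i <= 2 * \sum_(i < n.+1) b i.
Proof.
move=> a0 b0 a00 rec.
have shift : \sum_(i < n) a i.+1 <= \sum_(i < n) (a i / 2 + b i.+1).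
  by apply: ler_sum => i _; apply: (rec i.+1); rewrite /= ltn_ord.
have an : \sum_(i < n) a i <= \sum_(i < n.+1) a i by rewrite big_ord_recr lerDl.
have bn : \sum_(i < n) b i.+1 <= \sum_(i < n.+1) b i by rewrite [leRHS]big_ord_recl lerDr.
rewrite big_split -mulr_suml /= in shift.
have whole : \sum_(i < n.+1) a i = \sum_(i < n) a i.+1 by rewrite big_ord_recl a00 add0r.
lra.
Qed.

Section BlockCoupling.
Variables (R : realFieldType) (T : finType) (e : rel T).
Hypothesis e_equiv : equivalence_rel e.
Variables p q : T -> R.
Hypotheses (p0 : forall x, 0 <= p x) (q0 : forall x, 0 <= q x).
Hypothesis balanced : forall x, \sum_(y | e x y) p y = \sum_(y | e x y) q y.

Definition block_coupling (x y : T) : R :=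
  if e x y then p x * q y / \sum_(z | e x z) q z else 0.

Let e_refl x : e x x. Proof. by have [] := e_equiv x x x. Qed.

Let e_sym x y : e x y = e y x.
Proof.
apply/idP/idP => exy; [have [_ /(_ exy)] := e_equiv x y x | have [_ /(_ exy)] := e_equiv y x y].
  by rewrite e_refl => <-.
by rewrite e_refl => <-.
Qed.

Let e_class x y : e x y -> \sum_(z | e x z) q z = \sum_(z | e y z) q z.
Proof. by move=> exy; apply: eq_bigl => z; have [_ ->] := e_equiv x y z. Qed.

Lemma block_coupling_ge0 x y : 0 <= block_coupling x y.
Proof. by rewrite /block_coupling; case: ifP => // _; rewrite divr_ge0 ?mulr_ge0 ?sumr_ge0. Qed.

Lemma block_coupling_sumr x : \sum_y block_coupling x y = p x.
Proof.
rewrite /block_coupling -big_mkcond /=.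
under eq_bigr do rewrite mulrAC; rewrite -mulr_sumr.
have [Q0|] := eqVneq (\sum_(z | e x z) q z) 0; last by move=> /mulfVK.
have /psumr_eq0P : \sum_(z | e x z) p z = 0 by rewrite balanced.
by move=> /(_ (fun z _ => p0 z) x (e_refl x)) ->; rewrite !mul0r.
Qed.

Lemma block_coupling_suml y : \sum_x block_coupling x y = q y.
Proof.
rewrite /block_coupling.
transitivity (\sum_(x | e y x) p x * (q y / \sum_(z | e y z) q z)).
  rewrite [RHS]big_mkcond /=; apply: eq_bigr => x _; rewrite e_sym.
  by case: ifP => // exy; rewrite (e_class exy) mulrA.
rewrite -mulr_suml balanced.
have [Q0|] := eqVneq (\sum_(z | e y z) q z) 0; last by rewrite mulrC => /divfK.
by move/psumr_eq0P: Q0 => /(_ (fun z _ => q0 z) y (e_refl y)) ->; rewrite !mul0r mulr0.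
Qed.

End BlockCoupling.

Section Transport.
Variables (R : realType) (l : nat).
Local Notation gpoint := (gpoint l).
Implicit Types (x y z : gpoint) (p q r : gpoint -> R).

Lemma ler_natr_dist (a b m : nat) : (a < b + m)%N -> (b < a + m)%N ->
  `|a%:R - b%:R| <= m%:R :> R.
Proof.
move=> ab ba; rewrite ler_norml.
have ab' : a%:R <= b%:R + m%:R :> R by rewrite -natrD ler_nat ltnW.
have ba' : b%:R <= a%:R + m%:R :> R by rewrite -natrD ler_nat ltnW.
apply/andP; split; lra.
Qed.

Lemma dist1_ge0 x y : 0 <= dist1 R x y.
Proof. by rewrite divr_ge0 ?addr_ge0. Qed.

Lemma dist1_xx x : dist1 R x x = 0.
Proof. by rewrite /dist1 !subrr normr0 addr0 mul0r. Qed.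

Lemma dist1_triangle x y z : dist1 R x z <= dist1 R x y + dist1 R y z.
Proof.
rewrite /dist1 -mulrDl ler_wpM2r ?invr_ge0 ?ler0n //.
have := ler_distD ((y.1 : nat)%:R : R) (x.1 : nat)%:R (z.1 : nat)%:R.
have := ler_distD ((y.2 : nat)%:R : R) (x.2 : nat)%:R (z.2 : nat)%:R.
lra.
Qed.

Lemma dist1_le2 x y : dist1 R x y <= 2.
Proof.
have := ltn_ord x.1; have := ltn_ord x.2; have := ltn_ord y.1; have := ltn_ord y.2.
move=> y2 y1 x2 x1.
have d1 : `|(x.1 : nat)%:R - (y.1 : nat)%:R| <= (2 ^ l)%:R :> R by apply: ler_natr_dist; lia.
have d2 : `|(x.2 : nat)%:R - (y.2 : nat)%:R| <= (2 ^ l)%:R :> R by apply: ler_natr_dist; lia.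
rewrite /dist1 ler_pdivrMr ?ltr0n ?exp2_gt0 //; lra.
Qed.

Definition coupling_cost (g : gpoint -> gpoint -> R) : R :=
  \sum_x \sum_y g x y * dist1 R x y.

Lemma EMD_ge0 p q : 0 <= EMD p q.
Proof.
apply: inf_ge0 => v [g [g0 _ _ ->]].
by do 2![apply: sumr_ge0 => ? _]; rewrite mulr_ge0 ?dist1_ge0.
Qed.

Lemma EMD_le_cost p q g : (forall x y, 0 <= g x y) ->
  (forall x, \sum_y g x y = p x) -> (forall y, \sum_x g x y = q y) ->
  EMD p q <= coupling_cost g.
Proof.
move=> g0 gp gq; apply: ge0_inf_le; last by exists g.
by move=> v [g' [g'0 _ _ ->]]; do 2![apply: sumr_ge0 => ? _]; rewrite mulr_ge0 ?dist1_ge0.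
Qed.

Lemma l1p_ge0 r : 0 <= l1p r.
Proof. exact: sumr_ge0. Qed.

Lemma emd_norm_ge0 (f : gpoint -> R) : 0 <= emd_norm f.
Proof.
by apply: inf_ge0 => v [p [q [r [_ _ _ _ ->]]]]; rewrite addr_ge0 ?EMD_ge0 ?mulr_ge0 ?l1p_ge0.
Qed.

Lemma emd_norm_le (f : gpoint -> R) p q r : (forall x, 0 <= p x) -> (forall x, 0 <= q x) ->
  (forall x, p x - q x + r x = f x) -> \sum_x p x = \sum_x q x ->
  emd_norm f <= EMD p q + 2 * l1p r.
Proof.
move=> p0 q0 fE pq; apply: ge0_inf_le; last by exists p, q, r.
by move=> v [p' [q' [r' [_ _ _ _ ->]]]]; rewrite addr_ge0 ?EMD_ge0 ?mulr_ge0 ?l1p_ge0.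
Qed.

Lemma best_ksparse_emd_ge0 k (s : gpoint -> R) :
  0 <= best_ksparse_emd k s.
Proof. by apply: inf_ge0 => _ [s' [_ ->]]; apply: emd_norm_ge0. Qed.

End Transport.

Section PosNegParts.
Variable R : realFieldType.
Implicit Type x : R.

Definition pos_part x := (x + `|x|) / 2.
Definition neg_part x := (`|x| - x) / 2.

Lemma pos_part_ge0 x : 0 <= pos_part x.
Proof. by rewrite divr_ge0 //; have := ler_norm (- x); rewrite normrN; lra. Qed.

Lemma neg_part_ge0 x : 0 <= neg_part x.
Proof. by rewrite divr_ge0 //; have := ler_norm x; lra. Qed.

Lemma pos_partB_neg_part x : pos_part x - neg_part x = x.
Proof. by rewrite /pos_part /neg_part; field. Qed.

End PosNegParts.

Section SameCell.
Local Open Scope nat_scope.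
Variable l : nat.
Local Notation gpoint := (gpoint l).
Local Notation side := (side l).

Definition same_cell j (x y : gpoint) : bool :=
  (x.1 %/ side j == y.1 %/ side j) && (x.2 %/ side j == y.2 %/ side j).

Definition corner j (x : gpoint) : bool :=
  (x.1 %% side j == 0) && (x.2 %% side j == 0).

Lemma corner_of_lt (a : 'I_(2 ^ l)) j : a %/ side j * side j < 2 ^ l.
Proof. exact: leq_ltn_trans (leq_trunc_div _ _) (ltn_ord a). Qed.

Definition corner_of j (y : gpoint) : gpoint :=
  (Ordinal (corner_of_lt y.1 j), Ordinal (corner_of_lt y.2 j)).

Lemma corner_same_cell j x y : corner j x && same_cell j x y = (x == corner_of j y).
Proof.
have coord a b : (a %% side j == 0) && (a %/ side j == b %/ side j) =
    (a == b %/ side j * side j).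
  apply/idP/eqP => [/andP[/eqP a0 /eqP ab] | ->]; last by rewrite modnMl mulnK ?side_gt0 // !eqxx.
  by rewrite (divn_eq a (side j)) a0 ab addn0.
by rewrite andbACA !coord.
Qed.

Lemma same_cell_equiv j : equivalence_rel (same_cell j).
Proof.
move=> x y z; split; first by rewrite /same_cell !eqxx.
by rewrite /same_cell => /andP[/eqP-> /eqP->].
Qed.

Lemma same_cell_corner_of j y : same_cell j (corner_of j y) y.
Proof. by have := corner_same_cell j (corner_of j y) y; rewrite eqxx => /andP[]. Qed.

Lemma same_cell_coarser j j' x y : j' <= j -> j <= l -> same_cell j x y -> same_cell j' x y.
Proof.
move=> j'j jl; rewrite /same_cell.
have -> : side j' = side j * 2 ^ (j - j') by rewrite /side -expnD; congr (_ ^ _); lia.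
by rewrite !divnMA => /andP[/eqP-> /eqP->]; rewrite !eqxx.
Qed.

Lemma in_cell_of_same_cell j x y : j <= l -> in_cell (cell_of j x) y = same_cell j x y.
Proof.
move=> jl; rewrite in_cellE lev_cell_of // cell_x_cell_of // cell_y_cell_of //.
by rewrite /same_cell ![(y.1 %/ _ == _)]eq_sym ![(y.2 %/ _ == _)]eq_sym.
Qed.

Lemma same_cell_dist j x y : same_cell j x y ->
  [&& x.1 < y.1 + side j, y.1 < x.1 + side j, x.2 < y.2 + side j & y.2 < x.2 + side j].
Proof.
have close a b : a %/ side j = b %/ side j -> a < b + side j.
  move=> ab; rewrite {1}(divn_eq a (side j)) ab.
  by have := ltn_pmod a (side_gt0 l j); have := leq_trunc_div b (side j); lia.
by move=> /andP[/eqP e1 /eqP e2]; rewrite !close.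
Qed.

End SameCell.

Section Multiscale.
Variables (R : realType) (l : nat).
Local Notation gpoint := (gpoint l).
Local Notation gcell := (gcell l).
Variable f : gpoint -> R.

Definition cell_mass j x : R := \sum_(y | same_cell j x y) f y.

Definition corner_mass j x : R := if corner j x then cell_mass j x else 0.

Definition level_mass j : R :=
  \sum_(c : gcell | lev c == j) `|\sum_(p | in_cell c p) f p|.

Lemma sum_corner_mass j (Q : pred gpoint) : (j <= l)%N ->
  (forall x y, same_cell j x y -> Q x = Q y) ->
  \sum_(x | Q x) corner_mass j x = \sum_(y | Q y) f y.
Proof.
move=> jl Qj; rewrite /corner_mass -big_mkcondr /= /cell_mass.
rewrite (exchange_big_dep xpredT) //= [RHS]big_mkcond /=; apply: eq_bigr => y _.
have cy := same_cell_corner_of j y; have Qy := Qj _ _ cy.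
case: ifP => Qy'.
  rewrite (@eq_bigl _ _ _ _ _ _ (pred1 (corner_of j y))) ?big_pred1_eq // => x /=.
  by rewrite -andbA corner_same_cell; case: eqP => [->|]; rewrite ?Qy ?Qy' ?andbF.
rewrite big_pred0 // => x; rewrite -andbA corner_same_cell.
by case: eqP => [->|]; rewrite ?Qy ?Qy' ?andbF.
Qed.

Lemma sum_corner_mass_cell j j' x0 : (j' <= j)%N -> (j <= l)%N ->
  \sum_(x | same_cell j' x0 x) corner_mass j x = \sum_(y | same_cell j' x0 y) f y.
Proof.
move=> j'j jl; apply: sum_corner_mass => // x y /(same_cell_coarser j'j jl) xy.
by move: xy; rewrite /same_cell => /andP[/eqP-> /eqP->].
Qed.

Lemma corner_mass_finest x : corner_mass l x = f x.
Proof.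
have s1 : side l l = 1%N by rewrite /side subnn.
rewrite /corner_mass /corner /cell_mass /same_cell s1 !modn1 eqxx.
rewrite (@eq_bigl _ _ _ _ _ _ (pred1 x)) ?big_pred1_eq // => y /=.
by case: x y => [a b] [c d]; rewrite !divn1 xpair_eqE /= (eq_sym c) (eq_sym d).
Qed.

Lemma l1p_corner_mass j : (j <= l)%N -> l1p (corner_mass j) <= level_mass j.
Proof.
move=> jl; have -> : l1p (corner_mass j) = \sum_(x in [set x | corner j x]) `|cell_mass j x|.
  rewrite [RHS]big_mkcond; apply: eq_bigr => x _.
  by rewrite inE /corner_mass; case: ifP; rewrite ?normr0.
have mass_cell x : cell_mass j x = \sum_(p | in_cell (cell_of j x) p) f p.
  by apply: eq_bigl => y; rewrite in_cell_of_same_cell.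
under eq_bigr do rewrite mass_cell.
rewrite -(big_imset (fun c => `|\sum_(p | in_cell c p) f p|)) /=.
  by apply: ler_sum_subpred => // c /imsetP[x _ ->]; rewrite lev_cell_of.
move=> x x'; rewrite !inE => cx cx' e.
have xx' : same_cell j x x' by rewrite -in_cell_of_same_cell // e in_cell_cell_of.
have := corner_same_cell j x x'; rewrite cx xx' => /esym/eqP ->.
by have := corner_same_cell j x' x'; rewrite cx' (same_cell_equiv j x' x' x').1 => /esym/eqP.
Qed.

Definition corner_step j x : R := corner_mass j.+1 x - corner_mass j x.

Lemma sum_corner_step_cell j x0 : (j < l)%N ->
  \sum_(x | same_cell j x0 x) corner_step j x = 0.
Proof.
by move=> jl; rewrite sumrB !sum_corner_mass_cell ?subrr // ltnW.
Qed.

Lemma sum_corner_step j : (j < l)%N -> \sum_x corner_step j x = 0.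
Proof. by move=> jl; rewrite sumrB !(@sum_corner_mass _ xpredT) ?subrr // ltnW. Qed.

Definition step_plan j : gpoint -> gpoint -> R :=
  block_coupling (same_cell j) (fun x => pos_part (corner_step j x))
    (fun x => neg_part (corner_step j x)).

Lemma step_plan_balanced j : (j < l)%N -> forall x0,
  \sum_(x | same_cell j x0 x) pos_part (corner_step j x)
  = \sum_(x | same_cell j x0 x) neg_part (corner_step j x).
Proof.
move=> jl x0; apply/eqP; rewrite -subr_eq0 -sumrB.
by under eq_bigr do rewrite pos_partB_neg_part; rewrite sum_corner_step_cell.
Qed.

Lemma step_plan_ge0 j x y : 0 <= step_plan j x y.
Proof. by apply: block_coupling_ge0 => ?; [apply: pos_part_ge0 | apply: neg_part_ge0]. Qed.

Lemma step_plan_sumr j x : (j < l)%N -> \sum_y step_plan j x y = pos_part (corner_step j x).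
Proof.
move=> jl; apply: (block_coupling_sumr (same_cell_equiv j)) (step_plan_balanced jl) x.
by move=> ?; apply: pos_part_ge0.
Qed.

Lemma step_plan_suml j y : (j < l)%N -> \sum_x step_plan j x y = neg_part (corner_step j y).
Proof.
move=> jl; apply: (block_coupling_suml (same_cell_equiv j)) (step_plan_balanced jl) y.
by move=> ?; apply: neg_part_ge0.
Qed.

Lemma dist1_same_cell j (x y : gpoint) : (j <= l)%N -> same_cell j x y -> dist1 R x y <= 2 / 2 ^+ j.
Proof.
move=> jl /same_cell_dist /and4P[a b c d].
have d1 := ler_natr_dist R a b; have d2 := ler_natr_dist R c d.
rewrite /dist1 ler_pdivrMr ?ltr0n ?exp2_gt0 //.
have -> : (2 ^ l)%:R = (side l j)%:R * 2 ^+ j :> R by rewrite -natrX -natrM -expnD subnK.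
rewrite [_ * 2 ^+ j]mulrC mulrA divfK ?expf_neq0 ?pnatr_eq0 //; lra.
Qed.

Lemma step_plan_cost j : (j < l)%N ->
  coupling_cost (step_plan j) <= (\sum_x `|corner_step j x|) / 2 ^+ j.
Proof.
move=> jl; have half : \sum_x pos_part (corner_step j x) = (\sum_x `|corner_step j x|) / 2.
  by rewrite -mulr_suml big_split /= sum_corner_step // add0r.
apply: le_trans (_ : 2 / 2 ^+ j * \sum_x pos_part (corner_step j x) <= _); last first.
  rewrite half [leRHS](_ : _ = 2 / 2 ^+ j * ((\sum_x `|corner_step j x|) / 2)) //.
  by field; rewrite expf_neq0 // pnatr_eq0.
rewrite /coupling_cost mulr_sumr; apply: ler_sum => x _.
rewrite -step_plan_sumr // mulr_sumr; apply: ler_sum => y _.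
have [xy|nxy] := boolP (same_cell j x y); last first.
  by rewrite /step_plan /block_coupling (negbTE nxy) !mul0r mulr0.
by rewrite mulrC ler_wpM2r ?step_plan_ge0 // dist1_same_cell // ltnW.
Qed.

Lemma emd_norm_le_steps : emd_norm f <=
  \sum_(j < l) (\sum_x `|corner_step j x|) / 2 ^+ j + 2 * l1p (corner_mass 0).
Proof.
pose p x := \sum_(j < l) pos_part (corner_step j x).
pose q x := \sum_(j < l) neg_part (corner_step j x).
pose g x y := \sum_(j < l) step_plan j x y.
have p0 x : 0 <= p x by apply: sumr_ge0 => j _; apply: pos_part_ge0.
have q0 x : 0 <= q x by apply: sumr_ge0 => j _; apply: neg_part_ge0.
have pqf x : p x - q x + corner_mass 0 x = f x.
  rewrite -sumrB; under eq_bigr do rewrite pos_partB_neg_part.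
  rewrite -(big_mkord xpredT (fun j => corner_step j x)) telescope_sumr //.
  by rewrite corner_mass_finest subrK.
have pq : \sum_x p x = \sum_x q x.
  rewrite exchange_big [RHS]exchange_big; apply: eq_bigr => j _ /=.
  apply/eqP; rewrite -subr_eq0 -sumrB; under eq_bigr do rewrite pos_partB_neg_part.
  exact/eqP/sum_corner_step.
have g0 x y : 0 <= g x y by apply: sumr_ge0 => j _; apply: step_plan_ge0.
have gp x : \sum_y g x y = p x.
  by rewrite exchange_big; apply: eq_bigr => j _; apply: step_plan_sumr.
have gq y : \sum_x g x y = q y.
  by rewrite exchange_big; apply: eq_bigr => j _; apply: step_plan_suml.
apply: le_trans (emd_norm_le p0 q0 pqf pq) _; rewrite lerD2r.
apply: le_trans (EMD_le_cost g0 gp gq) _.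
have -> : coupling_cost g = \sum_(j < l) coupling_cost (step_plan j).
  rewrite /coupling_cost [RHS]exchange_big; apply: eq_bigr => x _ /=.
  by rewrite [RHS]exchange_big; apply: eq_bigr => y _; rewrite mulr_suml.
by apply: ler_sum => j _; apply: step_plan_cost.
Qed.

Lemma l1p_corner_step j : (j < l)%N ->
  \sum_x `|corner_step j x| <= level_mass j.+1 + level_mass j.
Proof.
move=> jl; apply: le_trans (_ : \sum_x (`|corner_mass j.+1 x| + `|corner_mass j x|) <= _).
  by apply: ler_sum => x _; apply: ler_normB.
by rewrite big_split lerD // l1p_corner_mass // ltnW.
Qed.

Lemma level_mass_ge0 j : 0 <= level_mass j.
Proof. exact: sumr_ge0. Qed.

Lemma emd_norm_le_level_mass : emd_norm f <= 3 * \sum_(j < l.+1) level_mass j / 2 ^+ j.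
Proof.
set S := \sum_(j < l.+1) _.
have A0 : level_mass 0 + \sum_(j < l) level_mass j.+1 / 2 ^+ j.+1 = S.
  by rewrite /S big_ord_recl expr0 divr1.
have Al : \sum_(j < l) level_mass j / 2 ^+ j <= S.
  by rewrite /S big_ord_recr lerDl divr_ge0 ?level_mass_ge0 ?exprn_ge0.
have shift : \sum_(j < l) level_mass j.+1 / 2 ^+ j = 2 * \sum_(j < l) level_mass j.+1 / 2 ^+ j.+1.
  rewrite mulr_sumr; apply: eq_bigr => j _; rewrite exprS invfM.
  by field; rewrite expf_neq0 ?pnatr_eq0.
have steps : \sum_(j < l) (\sum_x `|corner_step j x|) / 2 ^+ j <=
    \sum_(j < l) level_mass j.+1 / 2 ^+ j + \sum_(j < l) level_mass j / 2 ^+ j.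
  rewrite -big_split; apply: ler_sum => j _ /=; rewrite -mulrDl ler_wpM2r ?invr_ge0 ?exprn_ge0 //.
  exact: l1p_corner_step.
have := l1p_corner_mass (leq0n l); have := emd_norm_le_steps.
lra.
Qed.

Lemma l1c_Pmat : l1c (Pmat f) = \sum_(j < l.+1) level_mass j / 2 ^+ j.
Proof.
rewrite /l1c (partition_big (fun c : gcell => tag c) xpredT) //=.
apply: eq_bigr => j _; rewrite /level_mass mulr_suml; apply: eq_big => [c|c /eqP cj] //.
by rewrite /Pmat normrM ger0_norm ?invr_ge0 ?exprn_ge0 // mulrC /lev cj.
Qed.

Lemma emd_norm_le_l1c_Pmat : emd_norm f <= 3 * l1c (Pmat f).
Proof. by rewrite l1c_Pmat; apply: emd_norm_le_level_mass. Qed.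

End Multiscale.

Section LipschitzLowerBound.
Variables (R : realType) (l : nat).
Local Notation gpoint := (gpoint l).
Implicit Types (p q f h : gpoint -> R).

Definition lipschitz1 h := forall x y, h x - h y <= dist1 R x y.

Lemma EMD_ge_lipschitz p q h : (forall x, 0 <= p x) -> (forall x, 0 <= q x) ->
  \sum_x p x = \sum_x q x -> lipschitz1 h ->
  \sum_x p x * h x - \sum_x q x * h x <= EMD p q.
Proof.
move=> p0 q0 pq hlip.
have trivial_equiv : equivalence_rel (fun _ _ : gpoint => true) by [].
pose g := block_coupling (fun _ _ : gpoint => true) p q.
apply: lb_le_inf.
  exists (coupling_cost g), g; split => //.
  - by move=> x y; apply: block_coupling_ge0.
  - by move=> x; apply: block_coupling_sumr.
  - by move=> y; apply: block_coupling_suml.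
move=> _ [g' [g'0 g'p g'q ->]].
have -> : \sum_x p x * h x = \sum_x \sum_y g' x y * h x.
  by apply: eq_bigr => x _; rewrite -g'p mulr_suml.
have -> : \sum_x q x * h x = \sum_x \sum_y g' x y * h y.
  by rewrite exchange_big; apply: eq_bigr => y _; rewrite -g'q mulr_suml.
rewrite -sumrB; apply: ler_sum => x _; rewrite -sumrB; apply: ler_sum => y _.
by rewrite -mulrBr ler_wpM2l.
Qed.

Lemma emd_norm_ge_lipschitz f h : lipschitz1 h -> (forall x, 0 <= h x <= 2) ->
  \sum_x f x * h x <= emd_norm f.
Proof.
move=> hlip h02; apply: lb_le_inf.
  pose z : gpoint -> R := fun=> 0.
  by exists (EMD z z + 2 * l1p f), z, z, f; split => // x; rewrite subrr add0r.
move=> _ [p [q [r [p0 q0 fE pq ->]]]].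
have -> : \sum_x f x * h x = \sum_x p x * h x - \sum_x q x * h x + \sum_x r x * h x.
  by rewrite -sumrB -big_split; apply: eq_bigr => x _ /=; rewrite -mulrBl -mulrDl fE.
rewrite lerD ?EMD_ge_lipschitz // /l1p mulr_sumr; apply: ler_sum => x _.
have /andP[h0 h2] := h02 x.
apply: le_trans (_ : `|r x| * h x <= _); first by rewrite ler_wpM2r ?ler_norm.
by rewrite mulrC ler_wpM2r.
Qed.

End LipschitzLowerBound.

Section DistanceToSet.
Variables (R : realType) (l : nat).
Local Notation gpoint := (gpoint l).
Variables (K : {set gpoint}) (q0 : gpoint).
Hypothesis Kq0 : q0 \in K.

Definition nearest (x : gpoint) : gpoint := Order.arg_min q0 (mem K) (dist1 R x).

Definition dist_set (x : gpoint) : R := dist1 R x (nearest x).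

Lemma nearestP x : nearest x \in K /\ forall q, q \in K -> dist_set x <= dist1 R x q.
Proof. by rewrite /dist_set /nearest; case: arg_minP => // q Kq qmin; split => // q' /qmin. Qed.

Lemma dist_set_ge0 x : 0 <= dist_set x.
Proof. exact: dist1_ge0. Qed.

Lemma dist_set_eq0 x : x \in K -> dist_set x = 0.
Proof.
move=> Kx; apply/eqP; rewrite eq_le dist_set_ge0 andbT.
by have [_ /(_ x Kx)] := nearestP x; rewrite dist1_xx.
Qed.

Lemma dist_set_lipschitz : lipschitz1 dist_set.
Proof.
move=> x y; have [Ky _] := nearestP y; have [_ /(_ _ Ky) dx] := nearestP x.
have := dist1_triangle R x y (nearest y); rewrite -/(dist_set y); lra.
Qed.

Lemma emd_norm_ge_dist_set (s s' : gpoint -> R) : (forall x, s' x != 0 -> x \in K) ->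
  \sum_x s x * dist_set x <= emd_norm (fun x => s x - s' x).
Proof.
move=> s'K; have -> : \sum_x s x * dist_set x = \sum_x (s x - s' x) * dist_set x.
  apply: eq_bigr => x _; have [->|/s'K/dist_set_eq0->] := eqVneq (s' x) 0.
    by rewrite subr0.
  by rewrite !mulr0.
by apply: emd_norm_ge_lipschitz dist_set_lipschitz _ => x; rewrite dist_set_ge0 dist1_le2.
Qed.

End DistanceToSet.

Section InvPow2Sums.
Variable R : realFieldType.

Lemma sum_inv_pow2_le2 n : \sum_(i < n) (2 ^+ i)^-1 <= 2 :> R.
Proof.
elim: n => [|n IH]; first by rewrite big_ord0.
rewrite big_ord_recl expr0 invr1.
have -> : \sum_(i < n) (2 ^+ bump 0 i)^-1 = (\sum_(i < n) (2 ^+ i)^-1) / 2 :> R.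
  by rewrite mulr_suml; apply: eq_bigr => i _; rewrite exprS invfM mulrC.
lra.
Qed.

Lemma sum_small_inv_pow2 n (t : R) : 0 <= t ->
  \sum_(i < n) (if (2 ^+ i)^-1 < t then (2 ^+ i)^-1 else 0) <= 2 * t.
Proof.
elim: n t => [|n IH] t t0; first by rewrite big_ord0 mulr_ge0.
have [t1|t1] := lerP 1 t.
  apply: le_trans (_ : \sum_(i < n.+1) (2 ^+ i)^-1 <= _).
    by apply: ler_sum => i _; case: ifP => // _; rewrite invr_ge0 exprn_ge0.
  by apply: le_trans (sum_inv_pow2_le2 _) _; lra.
rewrite big_ord_recl /= expr0 invr1 ltNge (ltW t1) add0r.
have half i : (if (2 ^+ bump 0 i)^-1 < t then (2 ^+ bump 0 i)^-1 else 0)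
    = (if (2 ^+ i)^-1 < 2 * t then (2 ^+ i)^-1 else 0) / 2 :> R.
  rewrite exprS invfM -[in RHS](ltr_pM2l (_ : 0 < 2^-1)) ?invr_gt0 //.
  rewrite mulrA mulVf ?mul1r ?pnatr_eq0 //.
  by case: ifP; rewrite ?mul0r // mulrC.
under eq_bigr do rewrite half; rewrite -mulr_suml.
by have := IH (2 * t) (mulr_ge0 (ler0n _ 2) t0); lra.
Qed.

End InvPow2Sums.

Section NearTree.
Variables (R : realType) (l : nat).
Local Notation gpoint := (gpoint l).
Local Notation gcell := (gcell l).
Variables (K : {set gpoint}) (q0 : gpoint).
Hypothesis Kq0 : q0 \in K.
Variable r : nat.

Definition near_cell (c : gcell) (q : gpoint) : bool :=
  let m := side l (lev c) in
  [&& (cell_x c <= q.1 %/ m + r)%N, (q.1 %/ m <= cell_x c + r)%N,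
      (cell_y c <= q.2 %/ m + r)%N & (q.2 %/ m <= cell_y c + r)%N].

Definition near_tree : {set gcell} := [set c | [exists q in K, near_cell c q]].

Lemma root_near_tree : Defs.root l \in near_tree.
Proof.
rewrite inE; apply/existsP; exists q0; rewrite Kq0 /near_cell /side /=.
by rewrite subn0 !divn_small ?ltn_ord.
Qed.

Lemma near_tree_parent (c' c : gcell) : is_child c' c -> c' \in near_tree -> c \in near_tree.
Proof.
rewrite is_childE => /and3P[/eqP l' /eqP ex /eqP ey].
rewrite !inE => /existsP[q /andP[Kq qc']]; apply/existsP; exists q; rewrite Kq /=.
have cl := lev_leq c'; rewrite l' in cl.
move: qc'; rewrite /near_cell /= l' (side_succ cl) !divnMA -ex -ey.
by move=> /and4P[]; rewrite /= => *; apply/and4P; split; lia.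
Qed.

Lemma card_near_tree_level (i : nat) :
  (#|[set c in near_tree | lev c == i]| <= #|K| * (2 * r).+1 * (2 * r).+1)%N.
Proof.
have [il|li] := leqP i l; last first.
  rewrite (_ : [set c in near_tree | lev c == i] = finset.set0) ?cards0 //.
  by apply/setP => c; rewrite !inE; case: eqP => // ci; have := lev_leq c; lia.
set m := side l i; pose box := ('I_(2 * r).+1 * 'I_(2 * r).+1)%type.
pose F (z : gpoint * box) : gcell :=
  mkcell l i (z.1.1 %/ m + z.2.1 - r) (z.1.2 %/ m + z.2.2 - r).
apply: leq_trans (_ : #|F @: finset.setX K (finset.setTfor box)| <= _)%N; last first.
  by apply: leq_trans (leq_imset_card _ _) _; rewrite cardsX cardsT card_prod !card_ord mulnA.
apply: subset_leq_card; apply/fintype.subsetP => c; rewrite !inE.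
case/andP => /existsP[q /andP[Kq]] + /eqP ci.
rewrite /near_cell ci -/m => /and4P[x1 x2 y1 y2].
apply/imsetP; exists (q, (inord (cell_x c + r - q.1 %/ m), inord (cell_y c + r - q.2 %/ m))).
  by rewrite !inE Kq.
rewrite /F /= !inordK; try lia.
by rewrite {1}(mkcellE c) ci; congr mkcell; lia.
Qed.

Lemma near_tree_Tw w : (#|K| * (2 * r).+1 * (2 * r).+1 <= w)%N -> in_Tw w near_tree.
Proof.
move=> Kw; split; [exact: root_near_tree | exact: near_tree_parent |].
by move=> i; apply: leq_trans (card_near_tree_level i) Kw.
Qed.

Lemma dist_set_far i (x : gpoint) : (i <= l)%N -> cell_of i x \notin near_tree ->
  r%:R / 2 ^+ i < dist_set R K q0 x.
Proof.
move=> il far; rewrite ltNge; apply/negP => dle; move: far; rewrite inE => /existsP; apply.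
have [Ky _] := nearestP R Kq0 x; set y := nearest R K q0 x in Ky dle.
exists y; rewrite Ky /near_cell /= lev_cell_of // cell_x_cell_of // cell_y_cell_of //.
have m0 := side_gt0 l i; set m := side l i in m0 *.
have coord (a b : nat) : `|a%:R - b%:R| <= (r * m)%:R :> R -> (a %/ m <= b %/ m + r)%N.
  move=> ab; rewrite addnC -divnMDl // leq_div2r // -(ler_nat R) natrD.
  by have := ler_norm (a%:R - b%:R : R); lra.
have {}dle : `|(x.1 : nat)%:R - (y.1 : nat)%:R| + `|(x.2 : nat)%:R - (y.2 : nat)%:R|
    <= (r * m)%:R :> R.
  have hm : (2 ^ l)%:R = m%:R * 2 ^+ i :> R by rewrite /m /side -natrX -natrM -expnD subnK.
  move: dle; rewrite /dist_set /dist1 -/y hm ler_pdivrMr ?mulr_gt0 ?ltr0n ?exprn_gt0 //.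
  have -> // : r%:R / 2 ^+ i * (m%:R * 2 ^+ i) = (r * m)%:R :> R.
  by rewrite natrM; field; rewrite expf_neq0 // pnatr_eq0.
have d1 := normr_ge0 ((x.1 : nat)%:R - (y.1 : nat)%:R : R).
have d2 := normr_ge0 ((x.2 : nat)%:R - (y.2 : nat)%:R : R).
have e1 := distrC ((x.1 : nat)%:R : R) (y.1 : nat)%:R.
have e2 := distrC ((x.2 : nat)%:R : R) (y.2 : nat)%:R.
by apply/and4P; split; apply: coord; lra.
Qed.

End NearTree.

Section TreeRestriction.
Variables (R : realType) (l : nat).
Local Notation gpoint := (gpoint l).
Local Notation gcell := (gcell l).
Variable s : gpoint -> R.
Hypothesis s0 : forall x, 0 <= s x.

Definition Pmat_on (T : {set gcell}) (c : gcell) : R := if c \in T then Pmat s c else 0.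

Lemma Pmat_on_Mw w T : in_Tw w T -> in_Mw w (Pmat_on T).
Proof.
move=> Tw; have [_ Tpar _] := Tw; split.
- by move=> c; rewrite /Pmat_on; case: ifP => // _; apply: Pmat_ge0.
- by exists T; split => // c; rewrite /Pmat_on; case: ifP => //; rewrite eqxx.
move=> p pl; rewrite /Pmat_on; case: ifP => pT.
  rewrite -Pmat_children // ler_wpM2l // ler_sum // => c _.
  by case: ifP => _; rewrite ?(Pmat_ge0 s0).
by rewrite big1 ?mulr0 // => c cp; case: ifP => // cT; rewrite (Tpar _ _ cp cT) in pT.
Qed.

Lemma l1c_Pmat_sub_on T : l1c (fun c => Pmat s c - Pmat_on T c) =
  \sum_x s x * \sum_(c | in_cell c x) (if c \in T then 0 else (2 ^+ lev c)^-1).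
Proof.
transitivity (\sum_c \sum_(x | in_cell c x) (if c \in T then 0 else (2 ^+ lev c)^-1) * s x).
  apply: eq_bigr => c _; rewrite /Pmat_on; case: ifP => _.
    by rewrite subrr normr0 big1 // => x _; rewrite mul0r.
  by rewrite subr0 ger0_norm ?(Pmat_ge0 s0) // /Pmat mulr_sumr.
rewrite (exchange_big_dep xpredT) //=; apply: eq_bigr => x _.
by rewrite mulr_sumr; apply: eq_bigr => c _; rewrite mulrC.
Qed.

(* A level-[i] cell containing [x] is missing from the tree only if
   [r 2^-i < d(x, K)], so [x] is charged less than [2 d(x, K) / r]. *)
Lemma l1c_Pmat_sub_near_tree (K : {set gpoint}) q0 (Kq0 : q0 \in K) r : (0 < r)%N ->
  l1c (fun c => Pmat s c - Pmat_on (near_tree K r) c)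
    <= 2 / r%:R * \sum_x s x * dist_set R K q0 x.
Proof.
move=> r0; rewrite l1c_Pmat_sub_on mulr_sumr; apply: ler_sum => x _.
rewrite mulrCA ler_wpM2l // sum_cells_containing.
set t := dist_set R K q0 x / r%:R.
apply: le_trans (_ : _ <= \sum_(i < l.+1) (if (2 ^+ i)^-1 < t then (2 ^+ i)^-1 else 0)) _.
  apply: ler_sum => i _; have il : (i <= l)%N by rewrite -ltnS ltn_ord.
  rewrite lev_cell_of //; case: ifP => inT; case: ifP => // small.
    by rewrite invr_ge0 exprn_ge0.
  have := dist_set_far R Kq0 il (negbT inT); move: small => /negbT.
  rewrite -leNgt /t ler_pdivrMr ?ltr0n // => dle far.
  by have := lt_le_trans far dle; rewrite mulrC ltxx.
apply: le_trans (sum_small_inv_pow2 _ _) _; first by rewrite divr_ge0 ?dist_set_ge0.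
by rewrite /t mulrA mulrAC.
Qed.

End TreeRestriction.

Section SparseLowerBound.
Variables (R : realType) (l w : nat).
Local Notation gpoint := (gpoint l).
Local Notation gcell := (gcell l).
Variables (s : gpoint -> R) (ystar : gcell -> R).
Hypothesis s0 : forall x, 0 <= s x.
Hypothesis ystar_opt : forall y, in_Mw w y ->
  l1c (fun c => Pmat s c - ystar c) <= l1c (fun c => Pmat s c - y c).

Lemma Mw_error_le_emd_norm r (K : {set gpoint}) q0 (s' : gpoint -> R) :
  q0 \in K -> (0 < r)%N -> (#|K| * (2 * r).+1 * (2 * r).+1 <= w)%N ->
  (forall x, s' x != 0 -> x \in K) ->
  l1c (fun c => Pmat s c - ystar c) <= 2 / r%:R * emd_norm (fun x => s x - s' x).
Proof.
move=> Kq0 r0 Kw s'K.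
apply: le_trans (ystar_opt (Pmat_on_Mw s0 (near_tree_Tw Kq0 Kw))) _.
apply: le_trans (l1c_Pmat_sub_near_tree s0 Kq0 r0) _.
by rewrite ler_wpM2l ?divr_ge0 // emd_norm_ge_dist_set.
Qed.

Lemma Mw_error_le_best_ksparse k r : (0 < k)%N -> (0 < r)%N ->
  (k * (2 * r).+1 * (2 * r).+1 <= w)%N ->
  l1c (fun c => Pmat s c - ystar c) <= 2 / r%:R * best_ksparse_emd k s.
Proof.
move=> k0 r0 kw; have r2 : 0 < r%:R / 2 :> R by rewrite divr_gt0 ?ltr0n.
rewrite -[2 / r%:R]invf_div ler_pdivlMl //.
apply: lb_le_inf.
  exists (emd_norm (fun x => s x - 0)), (fun=> 0); split => //.
  rewrite (_ : #|_| = 0%N) //; apply/eqP; rewrite cards_eq0; apply/eqP/setP => x.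
  by rewrite !inE eqxx.
move=> _ [s' [s'k ->]]; rewrite -ler_pdivlMl // invf_div.
(* [nearest] needs a nonempty [K]: an empty support is padded with a point. *)
have [K [q0 [Kq0 Kk s'K]]] : exists (K : {set gpoint}) q0, [/\ q0 \in K, (#|K| <= k)%N &
    forall x, s' x != 0 -> x \in K].
  have [supp0|[q0 q0s]] := set_0Vmem [set x | s' x != 0].
    pose pt0 : gpoint := (Ordinal (exp2_gt0 l), Ordinal (exp2_gt0 l)).
    exists (finset.set1 pt0), pt0; split; rewrite ?set11 ?cards1 // => x s'x.
    have : x \in [set x | s' x != 0] by rewrite inE.
    by rewrite supp0 inE.
  by exists [set x | s' x != 0], q0; split => // x s'x; rewrite inE.
apply: Mw_error_le_emd_norm Kq0 r0 _ s'K.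
by apply: leq_trans kw; rewrite -!mulnA leq_mul2r Kk orbT.
Qed.

End SparseLowerBound.

Section Greedy.
Variables (R : realType) (l w : nat).
Local Notation gcell := (gcell l).
Variables (x nt y' : gcell -> R) (S : nat -> {set gcell}) (T : {set gcell}).
Hypothesis x0 : forall c, 0 <= x c.
Hypothesis x_children : forall c, (lev c < l)%N -> 2 * \sum_(c' | is_child c' c) x c' = x c.
Hypothesis y'E : forall c, y' c = x c + nt c.
Hypothesis S_greedy : greedy_run w y' S.
Hypothesis T_tree : in_Tw w T.

Definition missed i := [set c in T | lev c == i] :\: S i.
Definition missed_mass i := \sum_(c in missed i) x c.
Definition greedy_slack i :=
  \sum_(c in S i :\: T) x c + \sum_(c in S i) `|nt c| + \sum_(c in missed i) `|nt c|.

Lemma lev_greedy i c : (i <= l)%N -> c \in S i -> lev c = i.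
Proof.
case: S_greedy => S0 Si; elim: i c => [|i IH] c il; first by rewrite S0 inE => /eqP->.
have [Ssub _ _] := Si i.+1 (ltac:(lia)).
move=> /(fintype.subsetP Ssub); rewrite inE => /existsP[p /andP[Sp]].
by rewrite is_childE => /and3P[/eqP-> _ _]; rewrite (IH p) //; lia.
Qed.

Lemma lev_missed i c : c \in missed i -> lev c = i.
Proof. by rewrite !inE => /and3P[_ _ /eqP]. Qed.

Lemma lev_missed_or_greedy i c : (i <= l)%N -> c \in missed i :|: S i -> lev c = i.
Proof. by move=> il; rewrite finset.in_setU => /orP[/lev_missed | /(lev_greedy il)]. Qed.

Lemma missed_mass_ge0 i : 0 <= missed_mass i.
Proof. exact: sumr_ge0. Qed.

Lemma greedy_slack_ge0 i : 0 <= greedy_slack i.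
Proof. by rewrite !addr_ge0 ?sumr_ge0. Qed.

Lemma missed_mass0 : missed_mass 0 = 0.
Proof.
case: S_greedy => S0 _; rewrite /missed_mass big_pred0 // => c.
rewrite !inE S0 inE; apply/negP => /and3P[nroot _ /eqP/lev0_root croot].
by rewrite croot eqxx in nroot.
Qed.

Section Level.
Variable i : nat.
Hypothesis il : (0 < i <= l)%N.

Lemma missed_orphans_mass :
  \sum_(c in missed i | parent c \notin S i.-1) x c <= missed_mass i.-1 / 2.
Proof.
have [_ Tpar _] := T_tree.
rewrite (partition_big (@parent l) (fun p => p \in missed i.-1)) /=; last first.
  move=> c /andP[/[dup] /lev_missed ci]; rewrite !inE => /and3P[_ cT _] nSp.
  have ch : is_child c (parent c) by apply: child_parent; lia.
  by rewrite nSp (Tpar _ _ ch cT) /parent lev_mkcell ci //=; lia.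
rewrite /missed_mass mulr_suml; apply: ler_sum => p /lev_missed pi.
rewrite -x_children; last by lia.
rewrite mulrAC divff ?mul1r ?pnatr_eq0 //; apply: ler_sum_subpred => // c.
by case/andP => /andP[/lev_missed ci _] /eqP <-; apply: child_parent; lia.
Qed.

Definition missed_siblings := [set c in missed i | parent c \in S i.-1].

Lemma missed_sibling_lost c : c \in missed_siblings -> c \in children (S i.-1) :\: S i.
Proof.
rewrite !inE => /andP[/and3P[nS cT /eqP ci] pS]; rewrite nS /=.
by apply/existsP; exists (parent c); rewrite pS child_parent //; lia.
Qed.

(* A missed sibling lost to the cells of [S i], so [S i] is full; as [T] has at most
   [w] cells at level [i], at most [w - #|missed i|] cells of [S i] lie in [T]. *)
Lemma card_missed_siblings : (#|missed_siblings| <= #|S i :\: T|)%N.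
Proof.
case: S_greedy => _ /(_ i il)[Ssub Scard _]; have [_ _ Tcard] := T_tree.
have [->|[c0 Vc0]] := set_0Vmem missed_siblings; first by rewrite cards0.
have Sfull : #|S i| = w.
  have : S i \proper children (S i.-1).
    have := missed_sibling_lost Vc0; rewrite finset.in_setD => /andP[nS ch].
    by apply/properP; split => //; exists c0.
  by move/proper_card; rewrite Scard; lia.
have Vm : (#|missed_siblings| <= #|missed i|)%N.
  by apply/subset_leq_card/fintype.subsetP => c; rewrite inE => /andP[].
have ST : [set c in T | lev c == i] :&: S i = S i :&: T.
  apply/setP => c; rewrite !inE; case Sc: (c \in S i); rewrite ?andbF ?andbT //=.
  by rewrite (lev_greedy _ Sc) ?eqxx ?andbT //; case/andP: il.
by move: Vm (Tcard i); rewrite /missed !cardsD ST Sfull; lia.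
Qed.

Lemma missed_siblings_mass : \sum_(c in missed_siblings) x c <= greedy_slack i.
Proof.
case: S_greedy => _ /(_ i il)[_ _ Sgreedy].
apply: le_trans (_ : \sum_(c in missed_siblings) (y' c + `|nt c|) <= _).
  by apply: ler_sum => c _; rewrite y'E; have := ler_norm (- nt c); rewrite normrN; lra.
have yS : \sum_(c in missed_siblings) y' c <= \sum_(c in S i :\: T) (x c + `|nt c|).
  apply: ler_sum_dominated card_missed_siblings _ _ => [a b Va|b _]; last by rewrite addr_ge0.
  rewrite inE => /andP[_ Sb]; apply: le_trans (Sgreedy _ _ Sb (missed_sibling_lost Va)) _.
  by rewrite y'E lerD ?ler_norm.
have ntS : \sum_(c in S i :\: T) `|nt c| <= \sum_(c in S i) `|nt c|.
  by apply: ler_sum_subpred => // c; rewrite inE => /andP[].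
have ntV : \sum_(c in missed_siblings) `|nt c| <= \sum_(c in missed i) `|nt c|.
  by apply: ler_sum_subpred => // c; rewrite inE => /andP[].
rewrite big_split /= in yS; rewrite big_split /= /greedy_slack; lra.
Qed.

Lemma missed_mass_rec : missed_mass i <= missed_mass i.-1 / 2 + greedy_slack i.
Proof.
rewrite /missed_mass (bigID (fun c => parent c \in S i.-1)) /= addrC lerD ?missed_orphans_mass //.
rewrite (eq_bigl (fun c => c \in missed_siblings)) ?missed_siblings_mass // => c.
by rewrite [c \in missed_siblings]inE.
Qed.

End Level.

Lemma sum_missed_mass : \sum_(i < l.+1) missed_mass i <= 2 * \sum_(i < l.+1) greedy_slack i.
Proof.
apply: sum_le_of_halving; [exact: missed_mass_ge0 | exact: greedy_slack_ge0 |
  exact: missed_mass0 | exact: missed_mass_rec].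
Qed.

Definition selected := \bigcup_(i < l.+1) S i.
Definition greedy_estimate c := if c \in selected then y' c else 0.
Definition level_noise i := \sum_(c in missed i :|: S i) `|nt c|.

Lemma selected_lev c : c \in selected -> c \in S (lev c).
Proof. by case/bigcupP => i _ Sc; rewrite (lev_greedy _ Sc) // -ltnS. Qed.

Lemma l1c_sub_greedy_estimate : l1c (fun c => x c - greedy_estimate c) =
  \sum_(c in selected) `|nt c| + \sum_(c | c \notin selected) x c.
Proof.
rewrite /l1c (bigID (mem selected)) /=; congr (_ + _); apply: eq_bigr => c Sc.
  by rewrite /greedy_estimate Sc y'E opprD addrA subrr add0r normrN.
by rewrite /greedy_estimate (negbTE Sc) subr0 ger0_norm.
Qed.

Lemma unselected_mass : \sum_(c | c \notin selected) x c <=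
  \sum_(c | c \notin T) x c + \sum_(i < l.+1) missed_mass i.
Proof.
rewrite (bigID (mem T)) /= addrC lerD //.
  by apply: ler_sum_subpred => // c /andP[].
rewrite (partition_big (fun c : gcell => tag c) xpredT) //=; apply: ler_sum => j _.
apply: ler_sum_subpred => // c /andP[/andP[nS cT] /eqP cj].
rewrite !inE cT /lev cj eqxx /= !andbT.
by apply: contraNN nS => Sc; apply/bigcupP; exists j.
Qed.

Lemma sum_greedy_slack : \sum_(i < l.+1) greedy_slack i <=
  \sum_(c | c \notin T) x c + 2 * \sum_(i < l.+1) level_noise i.
Proof.
rewrite /greedy_slack !big_split /= -addrA lerD //.
  rewrite (partition_big (fun c : gcell => tag c) xpredT) //=; apply: ler_sum => j _.
  apply: ler_sum_subpred => // c; rewrite inE => /andP[nT Sc]; rewrite nT /=.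
  by apply/eqP/val_inj/(lev_greedy _ Sc); rewrite -ltnS.
rewrite mulr_sumr -big_split /=; apply: ler_sum => i _; rewrite mulr2n mulrDl mul1r.
by rewrite lerD // ler_sum_subpred // => c cA; rewrite finset.in_setU cA ?orbT.
Qed.

Lemma selected_noise : \sum_(c in selected) `|nt c| <= \sum_(i < l.+1) level_noise i.
Proof.
rewrite (partition_big (fun c : gcell => tag c) xpredT) //=; apply: ler_sum => j _.
apply: ler_sum_subpred => // c /andP[/selected_lev + /eqP cj].
by rewrite finset.in_setU /lev cj => ->; rewrite orbT.
Qed.

Lemma sum_level_noise_scaled (nu : gcell -> R) :
  (forall c, nt c = (2 ^+ lev c)^-1 * nu c) ->
  \sum_(i < l.+1) level_noise i =
  \sum_(i < l.+1) (2 ^+ i)^-1 * \sum_(c in missed i :|: S i | lev c == i) `|nu c|.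
Proof.
move=> ntE; apply: eq_bigr => i _; rewrite mulr_sumr big_mkcondr; apply: eq_bigr => c c_in /=.
have il : (i <= l)%N by rewrite -ltnS ltn_ord.
rewrite ntE (lev_missed_or_greedy il c_in) eqxx.
by rewrite normrM ger0_norm ?invr_ge0 ?exprn_ge0.
Qed.

Lemma l1c_sub_greedy_estimate_le : l1c (fun c => x c - greedy_estimate c) <=
  3 * \sum_(c | c \notin T) x c + 5 * \sum_(i < l.+1) level_noise i.
Proof.
have := sum_missed_mass; have := sum_greedy_slack; have := unselected_mass.
have := selected_noise; rewrite l1c_sub_greedy_estimate; lra.
Qed.

End Greedy.

Section CellVectors.
Variables (R : realType) (l : nat).
Local Notation gcell := (gcell l).

Lemma l1c_sub_le_argmin (a b z : gcell -> R) :
  l1c (fun c => a c - z c) <= l1c (fun c => a c - b c) ->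
  l1c (fun c => b c - z c) <= 2 * l1c (fun c => b c - a c).
Proof.
have -> : l1c (fun c => a c - b c) = l1c (fun c => b c - a c).
  by apply: eq_bigr => c _; rewrite distrC.
move=> az; apply: le_trans (_ : l1c (fun c => b c - a c) + l1c (fun c => a c - z c) <= _).
  rewrite /l1c -big_split; apply: ler_sum => c _ /=.
  by rewrite (le_trans _ (ler_normD _ _)) // addrA subrK.
lra.
Qed.

Lemma sum_outside_le_l1c (x y : gcell -> R) (T : {set gcell}) :
  (forall c, 0 <= x c) -> (forall c, y c != 0 -> c \in T) ->
  \sum_(c | c \notin T) x c <= l1c (fun c => x c - y c).
Proof.
move=> x0 yT; apply: le_trans (_ : \sum_(c | c \notin T) `|x c - y c| <= _).
  apply: ler_sum => c cT; have -> : y c = 0 by apply/eqP; apply: contraNT cT => /yT.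
  by rewrite subr0 ger0_norm.
exact: ler_sum_subpred.
Qed.

Lemma in_Tw_gt0 w (T : {set gcell}) : in_Tw w T -> (0 < w)%N.
Proof.
case=> rT _ /(_ 0%N); rewrite lt0n; apply: contraTneq => ->.
by rewrite -ltnNge card_gt0; apply/set0Pn; exists (Defs.root l); rewrite !inE rT.
Qed.

End CellVectors.

(* Take [r = floor(36 / eta) + 1]; then [2 r + 1 <= 75 / eta]. *)
Lemma radius_choice (R : realType) (eta : R) (k : nat) : 0 < eta < 1 ->
  exists r : nat, [/\ (0 < r)%N, 36 <= eta * r%:R &
    (k * (2 * r).+1 * (2 * r).+1 <= `|Num.ceil (75 ^+ 2 * k%:R / eta ^+ 2)|)%N].
Proof.
move=> /andP[eta0 eta1]; set t := 36 / eta; set r := (`|Num.floor t|%N).+1.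
have t0 : 0 <= t by rewrite divr_ge0 // ltW.
have rE : r%:R = (Num.floor t)%:~R + 1 :> R.
  by rewrite /r -addn1 natrD natr_absz ger0_norm ?floor_ge0.
have rt : t < r%:R by rewrite rE; have := floorD1_gt t; rewrite intrD.
have tr : r%:R <= t + 1 by rewrite rE lerD2r floor_le.
exists r; split => //.
  by apply: le_trans (ler_wpM2l (ltW eta0) (ltW rt)); rewrite /t mulrCA divff ?mulr1 ?gt_eqF.
have inv1 : 1 < eta^-1 by rewrite invf_gt1.
have tE : t = 36 * eta^-1 by [].
have r75 : ((2 * r).+1)%:R <= 75 / eta :> R by rewrite -addn1 natrD natrM; lra.
have c0 : 0 <= 75 ^+ 2 * k%:R / eta ^+ 2 by rewrite divr_ge0 ?mulr_ge0 ?exprn_ge0 // ltW.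
rewrite -(ler_nat R) natr_absz ger0_norm ?ceil_ge0; last by apply: lt_le_trans c0; rewrite ltrN10.
apply: le_trans (ceil_ge _).
have -> : 75 ^+ 2 * k%:R / eta ^+ 2 = k%:R * (75 / eta) * (75 / eta) :> R.
  by field; rewrite gt_eqF.
by rewrite !natrM ler_pM ?mulr_ge0 // ler_wpM2l.
Qed.

Theorem lemma4 :
  exists C1 C2 : Rdefinitions.R, 0 < C1 /\ 0 < C2 /\
  forall (eta' : Rdefinitions.R) (k w l : nat),
    0 < eta' < 1 ->
    w = `|Num.ceil (C1 * k%:R / eta' ^+ 2)|%N ->
  forall (s : gpoint l -> Rdefinitions.R) (nu : gcell l -> Rdefinitions.R),
    (forall x, 0 <= s x) ->
  (* y'_i = 2^-i (P_i s + nu_i), stacked over all levels *)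
  let y' := fun c : gcell l => (2 ^+ lev c)^-1 *
              (\sum_(p : gpoint l | in_cell c p) s p + nu c) in
  forall S : nat -> {set gcell l},
    greedy_run w y' S ->
  let Sall := \bigcup_(i < l.+1) S i in
  let yhat := fun c => if c \in Sall then y' c else 0 in
  forall shat : gpoint l -> Rdefinitions.R,
    (forall x, 0 <= shat x) ->
    (forall s' : gpoint l -> Rdefinitions.R, (forall x, 0 <= s' x) ->
       l1c (fun c => yhat c - Pmat shat c) <= l1c (fun c => yhat c - Pmat s' c)) ->
  forall ystar : gcell l -> Rdefinitions.R,
    in_Mw w ystar ->
    (forall y, in_Mw w y ->
       l1c (fun c => Pmat s c - ystar c) <= l1c (fun c => Pmat s c - y c)) ->
  forall Tstar : {set gcell l},
    in_Tw w Tstar ->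
    (forall c, ystar c != 0 -> c \in Tstar) ->
  let V := fun i : nat => [set c in Tstar | lev c == i] :\: S i in
  emd_norm (fun x => s x - shat x) <=
    eta' * best_ksparse_emd k s
    + C2 * \sum_(i < l.+1) (2 ^+ i)^-1 *
             \sum_(c in V i :|: S i | lev c == i) `|nu c|.
Proof.
exists (75 ^+ 2), 30; split; first by rewrite exprn_gt0. split => //.
move=> eta' k w l eta01 wE s nu s0 y' S S_greedy Sall yhat shat _ shat_opt
  ystar _ ystar_opt Tstar Tstar_Tw ystar_supp; cbv zeta.
set E := l1c (fun c => Pmat s c - ystar c).
set N := \sum_(i < l.+1) _.
have k0 : (0 < k)%N.
  rewrite lt0n; apply: contraTneq (in_Tw_gt0 Tstar_Tw) => k0.
  by rewrite wE k0 mulr0 mul0r ceil0.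
(* emd <= 3 |P (s - shat)| <= 6 |P s - yhat| <= 18 E + 30 N, and 18 E <= eta' best. *)
have [r [r0 r_eta kw]] := radius_choice k eta01; rewrite -wE in kw.
have sparse : 18 * E <= eta' * best_ksparse_emd k s.
  apply: le_trans (_ : 18 * (2 / r%:R * best_ksparse_emd k s) <= _).
    by rewrite ler_wpM2l // (Mw_error_le_best_ksparse s0 ystar_opt k0 r0 kw).
  rewrite mulrA ler_wpM2r ?best_ksparse_emd_ge0 //.
  by rewrite mulrA ler_pdivrMr ?ltr0n //; lra.
have upper : emd_norm (fun x => s x - shat x) <= 3 * l1c (fun c => Pmat s c - Pmat shat c).
  by rewrite /l1c; under eq_bigr do rewrite -Pmat_sub; apply: emd_norm_le_l1c_Pmat.
have estimate : l1c (fun c => Pmat s c - Pmat shat c) <= 2 * l1c (fun c => Pmat s c - yhat c).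
  exact: l1c_sub_le_argmin (shat_opt s s0).
have greedy : l1c (fun c => Pmat s c - yhat c) <=
    3 * \sum_(c | c \notin Tstar) Pmat s c + 5 * N.
  pose nt c := (2 ^+ lev c)^-1 * nu c.
  have y'E c : y' c = Pmat s c + nt c by rewrite /y' /nt /Pmat mulrDr.
  rewrite /N -(sum_level_noise_scaled Tstar S_greedy (nt := nt)) //.
  exact: l1c_sub_greedy_estimate_le (Pmat_ge0 s0) (Pmat_children s) y'E S_greedy Tstar_Tw.
have outside : \sum_(c | c \notin Tstar) Pmat s c <= E.
  exact: sum_outside_le_l1c (Pmat_ge0 s0) ystar_supp.
lra.
Qed.
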